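(* Let $(X,\tau)$ be an extended locally convex space and let $Y$ be a linear subspace of $X$. Then for every linear functional $f$ on $Y$ continuous with respect to $\tau|_Y$, there exists a $\tau$-continuous linear functional $\hat f$ on $X$ with $\hat f|_Y=f$.
   Context: An extended seminorm on a vector space $X$ over $\mathbb{R}$ or $\mathbb{C}$ is a map $\rho:X\to[0,\infty]$ with $\rho(\alpha x)=|\alpha|\rho(x)$ and $\rho(x+y)\le\rho(x)+\rho(y)$. An extended locally convex space $(X,\tau)$ is a vector space with the topology induced by a family $\{\rho_i\}$ of extended seminorms (neighborhood base at $x_0$: $\{x:\max_{i\in J}\rho_i(x-x_0)<\varepsilon\}$, $J$ finite, $\varepsilon>0$). *)

From HB Require Import structures.
From mathcomp Require Import all_boot all_order all_algebra.
From mathcomp Require Import classical_sets boolp cardinality reals constructive_ereal ereal.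
From mathcomp Require Import complex.

Set Implicit Arguments.
Unset Strict Implicit.
Unset Printing Implicit Defensive.

Import Order.TTheory GRing.Theory Num.Theory.
Local Open Scope ring_scope.
Local Open Scope classical_set_scope.

(* Scalars K (R or C), with a real absolute value absK : K -> R.
   X is a K-vector space.  *)
Section ELCS.
Variables (R : realType) (K : fieldType) (absK : K -> R) (X : lmodType K).

Definition ext_seminorm (rho : X -> \bar R) : Prop :=
  [/\ forall x, (0 <= rho x)%E,
      forall (a : K) (x : X), rho (a *: x) = ((absK a)%:E * rho x)%E
    & forall x y, (rho (x + y)%R <= rho x + rho y)%E].

Definition basic_nbhd (I : Type) (rho : I -> X -> \bar R) (J : set I) (e : R)
    (x0 : X) : set X :=
  [set x | forall i, J i -> (rho i (x - x0)%R < e%:E)%E].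

Definition lin_subspace (Y : set X) : Prop :=
  Y 0 /\ forall (a : K) x y, Y x -> Y y -> Y (a *: x + y).

(* f is a linear functional on Y (its values outside Y are irrelevant) *)
Definition linear_on (Y : set X) (f : X -> K) : Prop :=
  forall (a : K) x y, Y x -> Y y -> f (a *: x + y) = a * f x + f y.

(* f restricted to Y is continuous for tau|_Y, where tau is the topology
   generated by the family rho (neighbourhood base at y0 in Y:
   Y ∩ basic_nbhd J e y0), and K carries the topology of absK. *)
Definition cont_on (I : Type) (rho : I -> X -> \bar R) (Y : set X)
    (f : X -> K) : Prop :=
  forall y0, Y y0 -> forall eps : R, 0 < eps ->
    exists J : set I, exists e : R,
      [/\ finite_set J, 0 < e &
        forall y, Y y -> basic_nbhd rho J e y0 y -> absK (f y - f y0) < eps].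

End ELCS.

(* A functional that is continuous for tau|_Y is bounded on Y by a positive multiple p of a
   finite sum of the seminorms rho_i, and p is again an extended seminorm; conversely, every
   linear functional bounded by such a p is tau-continuous.  So it suffices to extend f with
   |f^| <= p: the Hahn-Banach theorem for the extended seminorm p.  It follows from Zorn's
   lemma on graphs of p-dominated partial functionals; in a one-dimensional extension step the
   new value c must satisfy a - p(d - x) <= c <= p(d' + x) - a' on the graph, which is possible
   by subadditivity, and unconstrained when p(d + x) = +oo throughout.  Complex scalars reduce
   to real ones: if g extends Re f then x |-> g x - i g (i x) extends f, and a rotation w with
   |w| = 1 and Re (w z) = |z| turns g <= p into |f^| <= p. *)

From HB Require Import structures.
From mathcomp Require Import all_boot all_order all_algebra.
From mathcomp Require Import classical_sets boolp cardinality reals constructive_ereal ereal.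
From mathcomp Require Import complex.
From mathcomp Require Import ring lra.

Set Implicit Arguments.
Unset Strict Implicit.
Unset Printing Implicit Defensive.

Import Order.TTheory GRing.Theory Num.Theory.
Local Open Scope ring_scope.
Local Open Scope classical_set_scope.

Section LinearOn.
Variables (K : fieldType) (X : lmodType K) (Y : set X) (f : X -> K).
Hypotheses (Y0 : Y 0) (f_lin : linear_on Y f).

Lemma linear_on0 : f 0 = 0.
Proof.
have := f_lin 1 Y0 Y0; rewrite scale1r addr0 mul1r => /(congr1 (fun z => z - f 0)).
by rewrite subrr addrK.
Qed.

Lemma linear_onZ a y : Y y -> f (a *: y) = a * f y.
Proof. by move=> Yy; rewrite -[a *: y]addr0 f_lin // linear_on0 addr0. Qed.

Lemma linear_onB x y : Y (x - y) -> Y y -> f (x - y) = f x - f y.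
Proof. by move=> Yxy Yy; have := f_lin 1 Yxy Yy; rewrite scale1r mul1r subrK => ->; rewrite addrK. Qed.

End LinearOn.

Lemma finite_set_range (T : Type) (A : set T) :
  finite_set A -> exists n (h : 'I_n -> T), A `<=` range h.
Proof.
case=> n /card_esym/card_bijP[f [g _ gK]].
exists n, (fun k : 'I_n => val (f (SigSub (mem_set (ltn_ord k : `I_n k))))).
move=> t At; set k := g (SigSub (mem_set At)).
have kn : (val k < n)%N by have := set_valP k.
exists (Ordinal kn) => //.
by rewrite (_ : SigSub _ = k) ?gK //; exact: val_inj.
Qed.

Section ExtSeminorm.
Variables (R : realType) (K : fieldType) (absK : K -> R) (X : lmodType K).

Lemma ext_seminorm_sum n (p : 'I_n -> X -> \bar R) :
  (forall k, ext_seminorm absK (p k)) ->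
  ext_seminorm absK (fun x => \sum_(k < n) p k x)%E.
Proof.
move=> p_sn; split=> [x|a x|x y].
- by apply: sume_ge0 => k _; case: (p_sn k).
- rewrite ge0_sume_distrr => [|k _]; last by case: (p_sn k).
  by apply: eq_bigr => k _; case: (p_sn k).
- by rewrite -big_split; apply: lee_sum => k _; case: (p_sn k).
Qed.

Lemma ext_seminorm_scale (c : R) (p : X -> \bar R) :
  0 <= c -> ext_seminorm absK p -> ext_seminorm absK (fun x => c%:E * p x)%E.
Proof.
move=> c0 [p0 pZ pD]; split=> [x|a x|x y].
- by rewrite mule_ge0.
- by rewrite pZ muleCA.
- by rewrite -ge0_muleDr // lee_wpmul2l.
Qed.

End ExtSeminorm.

Section HahnBanach.
Variables (R : realType) (V : lmodType R) (q : V -> \bar R).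
Hypothesis q_sn : ext_seminorm (fun r : R => `|r|) q.

Let q_ge0 x : (0 <= q x)%E. Proof. by case: q_sn. Qed.
Let qZ r x : q (r *: x) = (`|r|%:E * q x)%E. Proof. by case: q_sn. Qed.
Let qD x y : (q (x + y) <= q x + q y)%E. Proof. by case: q_sn. Qed.
Let qN x : q (- x) = q x.
Proof. by rewrite -scaleN1r qZ normrN normr1 mul1e. Qed.

Let le_q b x : (forall r, q x = r%:E -> b <= r) -> (b%:E <= q x)%E.
Proof. by case: (q x) (q_ge0 x) => [r _ /(_ r erefl)| |]; rewrite ?leey. Qed.

Let le_qZ s b x : 0 < s -> (b%:E <= q x)%E -> ((s * b)%:E <= q (s *: x))%E.
Proof. by move=> s0; rewrite qZ gtr0_norm // EFinM lee_pmul2l. Qed.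

Definition dominated_graph (G : set (V * R)) :=
  [/\ G (0, 0),
      forall x a b, G (x, a) -> G (x, b) -> a = b,
      forall c x y a b, G (x, a) -> G (y, b) -> G (c *: x + y, c * a + b)
    & forall x a, G (x, a) -> (a%:E <= q x)%E].

Definition extend_graph (G : set (V * R)) (x : V) (c : R) : set (V * R) :=
  [set p | exists d a t, G (d, a) /\ p = (d + t *: x, a + t * c)].

Section DominatedGraph.
Variable G : set (V * R).
Hypothesis G_dom : dominated_graph G.

Lemma dominated_graphZ r {d a} : G (d, a) -> G (r *: d, r * a).
Proof. by case: G_dom => G0 _ GD _ Gda; have := GD r _ _ _ _ Gda G0; rewrite !addr0. Qed.

Lemma dominated_graphN {d a} : G (d, a) -> G (- d, - a).
Proof. by move/(dominated_graphZ (-1)); rewrite scaleN1r mulN1r. Qed.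

Lemma dominated_graphD {d1 a1 d2 a2} : G (d1, a1) -> G (d2, a2) -> G (d1 + d2, a1 + a2).
Proof. by case: G_dom => _ _ GD _ G1 G2; have := GD 1 _ _ _ _ G1 G2; rewrite scale1r mul1r. Qed.

Lemma extend_graph_dominated x c : ~ (exists a, G (x, a)) ->
    (forall d a t, G (d, a) -> ((a + t * c)%:E <= q (d + t *: x))%E) ->
  dominated_graph (extend_graph G x c).
Proof.
move=> Gx cx; case: G_dom => G0 Gfun GD _; split.
- by exists 0, 0, 0; rewrite scale0r mul0r !addr0.
- move=> y b1 b2 [d1 [a1 [t1 [G1 [-> ->]]]]] [d2 [a2 [t2 [G2 []]]]] E ->.
  have [t12|t12] := eqVneq t1 t2.
    by subst t2; move/addIr: E => E; subst d2; rewrite (Gfun _ _ _ G1 G2).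
  have Ex : (t1 - t2) *: x = d2 - d1.
    by rewrite scalerBl; apply/eqP; rewrite subr_eq addrAC -E [d1 + _]addrC addrK.
  have x_dom : x = (t1 - t2)^-1 *: (d2 - d1).
    by rewrite -Ex scalerA mulVf ?scale1r // subr_eq0.
  case: Gx; exists ((t1 - t2)^-1 * (a2 - a1)); rewrite x_dom.
  exact/dominated_graphZ/(dominated_graphD G2 (dominated_graphN G1)).
- move=> r y z b1 b2 [d1 [a1 [t1 [G1 [-> ->]]]]] [d2 [a2 [t2 [G2 [-> ->]]]]].
  exists (r *: d1 + d2), (r * a1 + a2), (r * t1 + t2); split; first exact: GD.
  congr (_, _); last by ring.
  by rewrite scalerDr scalerA addrACA scalerDl.
- by move=> y b [d [a [t [Gda [-> ->]]]]]; exact: cx.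
Qed.

Lemma extension_value_scale x c :
    (forall d a, G (d, a) -> ((a + c)%:E <= q (d + x))%E) ->
    (forall d a, G (d, a) -> ((a - c)%:E <= q (d - x))%E) ->
  forall d a t, G (d, a) -> ((a + t * c)%:E <= q (d + t *: x))%E.
Proof.
move=> up lo d a t Gda.
have [t0|t0|->] := ltgtP t 0; last first.
- by rewrite mul0r scale0r !addr0; case: G_dom => _ _ _; apply.
- have -> : d + t *: x = t *: (t^-1 *: d + x).
    by rewrite scalerDr scalerA mulfV ?gt_eqF // scale1r.
  have -> : a + t * c = t * (t^-1 * a + c) by field; rewrite gt_eqF.
  by apply: le_qZ => //; apply/up/dominated_graphZ.
- have s0 : 0 < - t by rewrite oppr_gt0.
  have -> : d + t *: x = - t *: ((- t)^-1 *: d - x).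
    by rewrite scalerBr scalerA mulfV ?gt_eqF // scale1r scaleNr opprK.
  have -> : a + t * c = - t * ((- t)^-1 * a - c).
    by rewrite mulrBr mulrA mulfV ?gt_eqF // mul1r mulNr opprK.
  by apply: le_qZ => //; apply/lo/dominated_graphZ.
Qed.

Lemma exists_extension_value x : exists c,
  (forall d a, G (d, a) -> ((a + c)%:E <= q (d + x))%E) /\
  (forall d a, G (d, a) -> ((a - c)%:E <= q (d - x))%E).
Proof.
case: G_dom => _ _ _ Gq.
have gap d1 a1 d2 a2 r1 r2 : G (d1, a1) -> G (d2, a2) ->
    q (d1 - x) = r1%:E -> q (d2 + x) = r2%:E -> a1 - r1 <= r2 - a2.
  move=> G1 G2 q1 q2; have := qD (d1 - x) (d2 + x).
  rewrite addrACA addNr addr0 q1 q2 => /(le_trans (Gq _ _ (dominated_graphD G1 G2))).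
  by rewrite lee_fin; lra.
pose S := [set z | exists d a r, [/\ G (d, a), q (d - x) = r%:E & z = a - r]].
have [[d0 [a0 [r0 [G0 q0]]]]|none] :=
  pselect (exists d a r, G (d, a) /\ q (d + x) = r%:E); last first.
  (* q is infinite on x + dom G, hence also on - x + dom G: no constraint on c *)
  exists 0; split=> d a Gda; apply: le_q => r qr; case: none.
  - by exists d, a, r.
  - by exists (- d), (- a), r; rewrite addrC -opprB qN; split => //; exact: dominated_graphN.
have S_ub d a r : G (d, a) -> q (d + x) = r%:E -> ubound S (r - a).
  by move=> Gda qr _ [d1 [a1 [r1 [G1 q1 ->]]]]; exact: gap G1 Gda q1 qr.
have S_ne : S !=set0.
  exists (- a0 - r0), (- d0), (- a0), r0; split => //; first exact: dominated_graphN.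
  by rewrite -opprD qN.
have S_sup : has_sup S by split; last by exists (r0 - a0); exact: S_ub G0 q0.
exists (sup S); split=> d a Gda; apply: le_q => r qr.
- by have := ge_sup S_ne (S_ub _ _ _ Gda qr); lra.
- have : a - r <= sup S by apply: sup_upper_bound S_sup _ _; exists d, a, r.
  lra.
Qed.

End DominatedGraph.

Lemma dominated_graph_directed (U : set (V * R)) : U (0, 0) ->
    (forall p1 p2, U p1 -> U p2 ->
       exists2 G, dominated_graph G & [/\ G `<=` U, G p1 & G p2]) ->
  dominated_graph U.
Proof.
move=> U0 common; split=> //.
- move=> x a b U1 U2; have [G [_ Gfun _ _] [_ G1 G2]] := common _ _ U1 U2.
  exact: Gfun G1 G2.
- move=> c x y a b U1 U2; have [G [_ _ GD _] [GU G1 G2]] := common _ _ U1 U2.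
  exact/GU/GD.
- by move=> x a U1; have [G [_ _ _ Gq] [_ G1 _]] := common _ _ U1 U1; exact: Gq.
Qed.

Lemma dominated_graph_bigcup (G0 : set (V * R)) : dominated_graph G0 ->
  forall F : set (set (V * R)),
    F `<=` (fun G => dominated_graph (G `|` G0)) -> total_on F subset ->
  dominated_graph (\bigcup_(G in F) G `|` G0).
Proof.
move=> G0_dom F F_dom F_tot; have G00 : G0 (0, 0) by case: G0_dom.
apply: dominated_graph_directed; first by right.
have sub G : F G -> G `|` G0 `<=` \bigcup_(G in F) G `|` G0.
  by move=> FG p [Gp|G0p]; [left; exists G | right].
move=> p1 p2 [[G1 FG1 G1p]|G0p1] [[G2 FG2 G2p]|G0p2].
- have [G12|G21] := F_tot _ _ FG1 FG2.
  + by exists (G2 `|` G0); [exact: F_dom | split; [exact: sub | left; exact: G12 | left]].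
  + by exists (G1 `|` G0); [exact: F_dom | split; [exact: sub | left | left; exact: G21]].
- by exists (G1 `|` G0); [exact: F_dom | split; [exact: sub | left | right]].
- by exists (G2 `|` G0); [exact: F_dom | split; [exact: sub | right | left]].
- by exists G0 => //; split => // p; right.
Qed.

Theorem hahn_banach (Y : set V) (u : V -> R) :
    lin_subspace Y -> linear_on Y u -> (forall y, Y y -> ((u y)%:E <= q y)%E) ->
  exists g : V -> R,
    [/\ linear_on setT g, forall y, Y y -> g y = u y & forall x, ((g x)%:E <= q x)%E].
Proof.
move=> [Y0 YD] ulin udom.
pose gY := [set p : V * R | Y p.1 /\ p.2 = u p.1].
have gY_dom : dominated_graph gY.
  split=> [|x a b [_ /= ->] [_ /= ->] //|c x y a b [/= Yx ->] [/= Yy ->]|x a [/= Yx ->]].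
  - by split=> //=; rewrite (linear_on0 Y0 ulin).
  - by split; [exact: YD | rewrite ulin].
  - exact: udom.
have [A [A_dom Amax]] := Zorn_bigcup (dominated_graph_bigcup gY_dom).
set H := A `|` gY.
have H_total x : exists a, H (x, a).
  apply: contrapT => Hx.
  have [c [up lo]] := exists_extension_value A_dom x.
  have ext_dom := extend_graph_dominated A_dom Hx (extension_value_scale A_dom up lo).
  have H_ext : H `<=` extend_graph H x c.
    by move=> [d a] Hda; exists d, a, 0; rewrite scale0r mul0r !addr0.
  apply: (Amax (extend_graph H x c)); last by rewrite setUidl // => p gYp; apply: H_ext; right.
  split=> [p Ap|ext_A]; first by apply: H_ext; left.
  have H0 : H (0, 0) by case: A_dom.
  by apply: Hx; exists c; left; apply: ext_A; exists 0, 0, 1; rewrite scale1r mul1r !add0r.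
have [g Hg] := choice H_total.
exists g; case: A_dom => _ Hfun HD Hq; split=> [c x y _ _|y Yy|x].
- exact: Hfun (Hg _) (HD c _ _ _ _ (Hg x) (Hg y)).
- by apply: Hfun (Hg y) _; right.
- exact: Hq (Hg x).
Qed.

End HahnBanach.

Definition seminorm_extension_property (R : realType) (K : fieldType)
    (absK : K -> R) (X : lmodType K) :=
  forall (q : X -> \bar R) (Y : set X) (f : X -> K),
    ext_seminorm absK q -> lin_subspace Y -> linear_on Y f ->
    (forall y, Y y -> ((absK (f y))%:E <= q y)%E) ->
  exists g : X -> K, [/\ linear_on setT g, forall y, Y y -> g y = f y
    & forall x, ((absK (g x))%:E <= q x)%E].

Lemma real_seminorm_extension (R : realType) (V : lmodType R) :
  seminorm_extension_property (fun r : R => `|r|) V.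
Proof.
move=> q Y f q_sn Ysub f_lin f_dom.
have f_le_q y : Y y -> ((f y)%:E <= q y)%E.
  by move=> Yy; apply: le_trans (f_dom y Yy); rewrite lee_fin ler_norm.
have [g [g_lin gf gq]] := hahn_banach q_sn Ysub f_lin f_le_q.
exists g; split=> // x; have [gx0|gx0] := leP 0 (g x); first by rewrite ger0_norm.
have := gq (-1 *: x); case: q_sn => _ -> _.
by rewrite (linear_onZ Logic.I g_lin) // normrN1 mul1e mulN1r ltr0_norm.
Qed.

Section Complexification.
Variables (R : realType) (X : lmodType (complex R)).
Local Open Scope complex_scope.

Lemma normc_real (r : R) : Normc.normc r%:C = `|r|.
Proof. by rewrite /Normc.normc /= expr0n addr0 sqrtr_sqr. Qed.

Lemma Re_le_normc (z : complex R) : complex.Re z <= Normc.normc z.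
Proof.
case: z => a b /=; rewrite (le_trans (ler_norm a)) // -sqrtr_sqr.
by rewrite ler_wsqrtr // lerDl sqr_ge0.
Qed.

Lemma normc_rotate (z : complex R) :
  exists w : complex R, Normc.normc w = 1 /\ complex.Re (w * z) = Normc.normc z.
Proof.
have [->|z0] := eqVneq z 0; first by exists 1; rewrite mulr0 Normc.normc1 Normc.normc0.
exists ((Normc.normc z)%:C / z); rewrite mulfVK //; split => //.
rewrite Normc.normcM Normc.normcV normc_real ger0_norm ?mulfV //.
  by apply: contra z0 => /eqP/Normc.eq0_normc ->.
by case: z {z0} => a b; rewrite /Normc.normc sqrtr_ge0.
Qed.

Definition realify : Type := X.
HB.instance Definition _ := GRing.Zmodule.on realify.

Definition realify_scale (r : R) (x : realify) : realify := r%:C *: (x : X).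

Lemma realify_scaleA a b x :
  realify_scale a (realify_scale b x) = realify_scale (a * b) x.
Proof. by rewrite /realify_scale scalerA -rmorphM. Qed.

Lemma realify_scale1 : left_id 1 realify_scale.
Proof. by move=> x; rewrite /realify_scale rmorph1 scale1r. Qed.

Lemma realify_scaleDr : right_distributive realify_scale +%R.
Proof. by move=> a x y; rewrite /realify_scale scalerDr. Qed.

Lemma realify_scaleDl x : {morph realify_scale^~ x : a b / a + b}.
Proof. by move=> a b; rewrite /realify_scale rmorphD scalerDl. Qed.

HB.instance Definition _ := GRing.Zmodule_isLmodule.Build R realify
  realify_scaleA realify_scale1 realify_scaleDr realify_scaleDl.

Lemma realifyZE r (x : realify) : r *: x = r%:C *: (x : X).
Proof. by []. Qed.

Lemma ext_seminorm_realify (q : X -> \bar R) :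
  ext_seminorm (@Normc.normc R) q -> ext_seminorm (fun r : R => `|r|) (q : realify -> _).
Proof. by case=> q0 qZ qD; split=> // r x; rewrite realifyZE qZ normc_real. Qed.

Lemma lin_subspace_realify (Y : set X) : lin_subspace Y -> lin_subspace (Y : set realify).
Proof. by case=> Y0 YD; split=> // r x y; rewrite realifyZE; exact: YD. Qed.

Lemma linear_on_Re (Y : set X) (f : X -> complex R) :
  linear_on Y f -> linear_on (Y : set realify) (fun x => complex.Re (f x)).
Proof.
move=> f_lin r x y Yx Yy; rewrite realifyZE f_lin //.
by case: (f x) => a b; case: (f y) => c d /=; ring.
Qed.

Definition complexify (g : realify -> R) (x : X) : complex R := g x -i* g ('i *: x).

Lemma complexify_linear (g : realify -> R) :
  linear_on setT g -> linear_on setT (complexify g).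
Proof.
move=> g_lin [a b] x y _ _.
have gD u v : g (u + v) = g u + g v.
  by have := g_lin 1 u v Logic.I Logic.I; rewrite scale1r mul1r.
have gZ r u : g (r%:C *: u) = r * g u by rewrite -realifyZE (linear_onZ Logic.I g_lin).
have Zx : (a +i* b) *: x = a%:C *: x + b%:C *: ('i *: x).
  by rewrite scalerA -scalerDl; congr (_ *: _); simpc.
have iZx : 'i *: ((a +i* b) *: x) = (- b)%:C *: x + a%:C *: ('i *: x).
  by rewrite Zx scalerDr !scalerA addrC; congr (_ + _); congr (_ *: _); simpc.
rewrite /complexify scalerDr !gD iZx Zx !gD !gZ /=; congr (_ +i* _); ring.
Qed.

Lemma complexify_Re (Y : set X) (f : X -> complex R) (g : realify -> R) :
    lin_subspace Y -> linear_on Y f -> (forall y, Y y -> g y = complex.Re (f y)) ->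
  forall y, Y y -> complexify g y = f y.
Proof.
move=> [Y0 YD] f_lin gf y Yy.
have Yiy : Y ('i *: y) by rewrite -[_ *: y]addr0; exact: YD.
rewrite /complexify !gf // (linear_onZ Y0 f_lin) //.
by case: (f y) => a b /=; simpc.
Qed.

Lemma complexify_dominated (q : X -> \bar R) (g : realify -> R) :
    ext_seminorm (@Normc.normc R) q -> linear_on setT g ->
    (forall x, ((g x)%:E <= q x)%E) ->
  forall x, ((Normc.normc (complexify g x))%:E <= q x)%E.
Proof.
move=> [_ qZ _] g_lin gq x.
have [w [w1 <-]] := normc_rotate (complexify g x).
rewrite -(linear_onZ Logic.I (complexify_linear g_lin)) //.
by have := gq (w *: x); rewrite qZ w1 mul1e.
Qed.

End Complexification.

Lemma complex_seminorm_extension (R : realType) (X : lmodType (complex R)) :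
  seminorm_extension_property (@Normc.normc R) X.
Proof.
move=> q Y f q_sn Ysub f_lin f_dom.
have Re_le_q y : Y y -> ((complex.Re (f y))%:E <= q y)%E.
  by move=> Yy; apply: le_trans (f_dom y Yy); rewrite lee_fin Re_le_normc.
have [g [g_lin gf gq]] := hahn_banach (ext_seminorm_realify q_sn)
  (lin_subspace_realify Ysub) (linear_on_Re f_lin) Re_le_q.
exists (complexify g); split.
- exact: complexify_linear.
- exact: complexify_Re.
- exact: complexify_dominated.
Qed.

Section ContinuousExtension.
Variables (R : realType) (K : fieldType) (absK : K -> R) (X : lmodType K).
Variables (I : Type) (rho : I -> X -> \bar R).
Hypotheses (absK0 : absK 0 = 0) (absK1 : absK 1 = 1).
Hypothesis absKM : {morph absK : a b / a * b}.
Hypothesis rho_sn : forall i, ext_seminorm absK (rho i).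

Lemma cont_on_dominated (Y : set X) (f : X -> K) :
    lin_subspace Y -> linear_on Y f -> cont_on absK rho Y f ->
  exists n (h : 'I_n -> I) (c : R), 0 < c /\
    forall y, Y y -> ((absK (f y))%:E <= c%:E * \sum_(k < n) rho (h k) y)%E.
Proof.
move=> [Y0 YD] f_lin f_cont.
have [J [e [J_fin e0 J_cont]]] := f_cont 0 Y0 1 ltr01.
have [n [h J_h]] := finite_set_range J_fin.
exists n, h, e^-1; split=> [|y Yy]; first by rewrite invr_gt0.
set S := (\sum_(k < n) rho (h k) y)%E; rewrite leNgt; apply/negP => S_lt.
have S_ge0 : (0 <= S)%E by apply: sume_ge0 => k _; case: (rho_sn (h k)).
have fy_gt0 : 0 < absK (f y).
  by rewrite -lte_fin (le_lt_trans _ S_lt) // mule_ge0 // lee_fin invr_ge0 ltW.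
have fy0 : f y != 0 by apply: contraTneq fy_gt0 => ->; rewrite absK0 ltxx.
have absKV : absK (f y)^-1 = (absK (f y))^-1.
  by apply: (mulIf (lt0r_neq0 fy_gt0)); rewrite -absKM !mulVf ?absK1 ?lt0r_neq0.
have Y_fy : Y ((f y)^-1 *: y) by rewrite -[_ *: y]addr0; exact: YD.
(* (f y)^-1 *: y lies in the neighbourhood where |f| < 1, yet f takes the value 1 there. *)
suff : absK (f ((f y)^-1 *: y) - f 0) < 1.
  by rewrite (linear_onZ Y0 f_lin) // (linear_on0 Y0 f_lin) mulVf // subr0 absK1 ltxx.
apply: J_cont => // i /J_h[k _ <-]; rewrite subr0.
case: (rho_sn (h k)) => _ -> _; rewrite absKV.
apply: (@le_lt_trans _ _ ((absK (f y))^-1%:E * S)%E).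
  apply: lee_wpmul2l; first by rewrite lee_fin invr_ge0 ltW.
  rewrite /S (bigD1 k) //= leeDl //.
  by apply: sume_ge0 => j _; case: (rho_sn (h j)).
by rewrite lte_pdivrMl // muleC -lte_pdivrMl.
Qed.

Lemma dominated_cont_on n (h : 'I_n -> I) (c : R) (f : X -> K) :
    linear_on setT f -> 0 < c ->
    (forall x, ((absK (f x))%:E <= c%:E * \sum_(k < n) rho (h k) x)%E) ->
  cont_on absK rho setT f.
Proof.
move=> f_lin c0 f_dom x0 _ eps eps0.
have n1_gt0 : 0 < n.+1%:R :> R by rewrite ltr0n.
pose e := eps / (c * n.+1%:R).
exists (range h), e; split.
- exact/finite_image/finite_finset.
- by rewrite divr_gt0 // mulr_gt0.
move=> y _ y_near; rewrite -(linear_onB f_lin) //.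
have S_le : (\sum_(k < n) rho (h k) (y - x0) <= (n%:R * e)%:E)%E.
  apply: (@le_trans _ _ (\sum_(k < n) e%:E)%E).
    by apply: lee_sum => k _; apply/ltW/y_near; exists k.
  by rewrite sumEFin sumr_const card_ord mulr_natl.
rewrite -lte_fin (le_lt_trans (f_dom _)) // (le_lt_trans (lee_wpmul2l _ S_le)) ?lee_fin ?ltW //.
rewrite -EFinM lte_fin.
have -> : c * (n%:R * e) = eps * (n%:R / n.+1%:R).
  by rewrite /e; field; rewrite !gt_eqF.
by rewrite gtr_pMr // ltr_pdivrMr // mul1r ltr_nat.
Qed.

Hypothesis absK_extension : seminorm_extension_property absK X.

Theorem continuous_extension (Y : set X) (f : X -> K) :
    lin_subspace Y -> linear_on Y f -> cont_on absK rho Y f ->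
  exists fh : X -> K,
    [/\ linear_on setT fh, cont_on absK rho setT fh & forall y, Y y -> fh y = f y].
Proof.
move=> Ysub f_lin f_cont.
have [n [h [c [c0 f_dom]]]] := cont_on_dominated Ysub f_lin f_cont.
have q_sn := ext_seminorm_scale (ltW c0) (ext_seminorm_sum (fun k => rho_sn (h k))).
have [g [g_lin gf g_dom]] := absK_extension q_sn Ysub f_lin f_dom.
by exists g; split=> //; exact: dominated_cont_on g_lin c0 g_dom.
Qed.

End ContinuousExtension.

Theorem corollary4p2 :
  (* real scalars *)
  (forall (R : realType) (X : lmodType R) (I : Type) (rho : I -> X -> \bar R),
     (forall i, ext_seminorm (fun a : R => `|a|) (rho i)) ->
     forall (Y : set X), lin_subspace Y ->
     forall f : X -> R, linear_on Y f ->
       cont_on (fun a : R => `|a|) rho Y f ->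
       exists fh : X -> R,
         [/\ linear_on setT fh, cont_on (fun a : R => `|a|) rho setT fh
           & forall y, Y y -> fh y = f y])
  /\
  (* complex scalars *)
  (forall (R : realType) (X : lmodType (complex R)) (I : Type)
     (rho : I -> X -> \bar R),
     (forall i, ext_seminorm (@Normc.normc R) (rho i)) ->
     forall (Y : set X), lin_subspace Y ->
     forall f : X -> complex R, linear_on Y f ->
       cont_on (@Normc.normc R) rho Y f ->
       exists fh : X -> complex R,
         [/\ linear_on setT fh, cont_on (@Normc.normc R) rho setT fh
           & forall y, Y y -> fh y = f y]).
Proof.
split=> R X I rho rho_sn Y Ysub f f_lin f_cont.
- apply: (continuous_extension (absK := fun a : R => `|a|)) => //.
  + exact: normr0.
  + exact: normr1.
  + exact: normrM.
  + exact: real_seminorm_extension.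
- apply: (continuous_extension (absK := @Normc.normc R)) => //.
  + exact: Normc.normc0.
  + exact: Normc.normc1.
  + exact: Normc.normcM.
  + exact: complex_seminorm_extension.
Qed.
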